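(* Let $a\in\mathbb R$, $b\in[a,\infty)$, $d,L\in\mathbb N$, $l=(l_0,l_1,\dots,l_L)\in\mathbb N^{L+1}$ satisfy $d\ge\sum_{k=1}^Ll_k(l_{k-1}+1)$. Then for all $\theta,\vartheta\in\mathbb R^d$, $$\sup_{x\in[a,b]^{l_0}}\|\mathscr N^{\theta,l}_{-\infty,\infty}(x)-\mathscr N^{\vartheta,l}_{-\infty,\infty}(x)\|_\infty\le\max\{1,|a|,|b|\}\,\|\theta-\vartheta\|_\infty\Bigl[\prod_{m=0}^{L-1}(l_m+1)\Bigr]\Bigl[\sum_{n=0}^{L-1}\max\{1,\|\theta\|_\infty^n\}\,\|\vartheta\|_\infty^{L-1-n}\Bigr]$$ $$\le L\max\{1,|a|,|b|\}\bigl(\max\{1,\|\theta\|_\infty,\|\vartheta\|_\infty\}\bigr)^{L-1}\Bigl[\prod_{m=0}^{L-1}(l_m+1)\Bigr]\|\theta-\vartheta\|_\infty\le L\max\{1,|a|,|b|\}(\|l\|_\infty+1)^L\bigl(\max\{1,\|\theta\|_\infty,\|\vartheta\|_\infty\}\bigr)^{L-1}\|\theta-\vartheta\|_\infty.$$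
   Context: $\|\cdot\|_\infty$ denotes the maximum norm $\|\theta\|_\infty=\max_i|\theta_i|$ on any $\mathbb R^n$ (also applied to $l$). For $r,s\in\mathbb N$, $k\in\mathbb N_0$, $\theta\in\mathbb R^d$ with $d\ge k+rs+r$, $\mathcal A^{\theta,k}_{r,s}\colon\mathbb R^s\to\mathbb R^r$ has $i$-th component $x\mapsto\sum_{j=1}^s\theta_{k+(i-1)s+j}x_j+\theta_{k+rs+i}$. $\mathfrak R_n$ applies $y\mapsto\max\{y,0\}$ componentwise on $\mathbb R^n$. With $s_k=\sum_{j=1}^kl_j(l_{j-1}+1)$, the unclipped ReLU network is $\mathscr N^{\theta,l}_{-\infty,\infty}=\mathcal A^{\theta,s_{L-1}}_{l_L,l_{L-1}}\circ\mathfrak R_{l_{L-1}}\circ\mathcal A^{\theta,s_{L-2}}_{l_{L-1},l_{L-2}}\circ\cdots\circ\mathfrak R_{l_1}\circ\mathcal A^{\theta,0}_{l_1,l_0}\colon\mathbb R^{l_0}\to\mathbb R^{l_L}$ (for $L=1$ just $\mathcal A^{\theta,0}_{l_1,l_0}$). Convention $0^0=1$. *)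

From HB Require Import structures.
From mathcomp Require Import all_boot all_order all_algebra.
From mathcomp Require Import classical_sets boolp reals.
Set Implicit Arguments. Unset Strict Implicit. Unset Printing Implicit Defensive.
Import Order.TTheory GRing.Theory Num.Theory.
Local Open Scope ring_scope.

Section DNN.
Variable R : realType.

(* A finite vector viewed as a function on nat (padded by 0 outside the
   index range).  Used to read parameters theta_{n+1} = vec_at theta n
   (0-based) and the input coordinates. *)
Definition vec_at (n : nat) (v : 'rV[R]_n) (k : nat) : R :=
  if insub k is Some i then v 0 i else 0.

Definition maxnorm (n : nat) (v : 'rV[R]_n) : R :=
  \big[Num.max/0]_(i < n) `|v 0 i|.

(* affine map A^{th,k}_{r,s}, 0-based: component i (i < r) is
   sum_{j<s} th_(k + i*s + j) x_j + th_(k + r*s + i) *)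
Definition affine (th : nat -> R) (k r s : nat) (x : nat -> R) : nat -> R :=
  fun i => \sum_(j < s) th (k + i * s + j)%N * x j + th (k + r * s + i)%N.

Definition relu (x : nat -> R) : nat -> R := fun i => Num.max (x i) 0.

Definition sidx (l : seq nat) (k : nat) : nat :=
  \sum_(1 <= j < k.+1) nth 0 l j * (nth 0 l j.-1 + 1).

Fixpoint layer_out (th : nat -> R) (l : seq nat) (m : nat) (x : nat -> R)
  : nat -> R :=
  match m with
  | 0 => x
  | m'.+1 => affine th (sidx l m') (nth 0 l m'.+1) (nth 0 l m')
               (if m' is 0 then x else relu (layer_out th l m' x))
  end.

(* realization N^{theta,l}_{-oo,oo}(x) of the unclipped ReLU network with
   architecture l = (l_0,...,l_L); as a function of the output index *)
Definition realization (d L : nat) (l : (L.+1).-tuple nat) (theta : 'rV[R]_d)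
  (x : 'rV[R]_(nth 0 l 0)) : nat -> R :=
  layer_out (vec_at theta) l L (vec_at x).

End DNN.

Arguments realization {R d L} l theta x _.

(** Let z_k and z'_k be the
   inputs of layer k+1 for the parameters θ and ϑ, C the bound on the input
   and P_k = ∏_{m<k} (l_m + 1).  Each output coordinate of an affine layer
   sums l_k + 1 terms, and the difference of two of them splits as
   θ z - ϑ z' = (θ - ϑ) z + ϑ (z - z').  As the ReLU is a contraction
   fixing 0, induction on k gives
     ‖z_k‖ ≤ C P_k max(1, ‖θ‖^k) =: D_k  and
     ‖z_k - z'_k‖ ≤ E_k  with  E_{k+1} = (l_k + 1) (‖θ - ϑ‖ D_k + ‖ϑ‖ E_k),
   and unrolling E_L is the first bound.  The other two only bound every
   summand by max(1, ‖θ‖, ‖ϑ‖)^(L-1) and every factor l_m + 1 by ‖l‖ + 1. *)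
From HB Require Import structures.
From mathcomp Require Import all_boot all_order all_algebra.
From mathcomp Require Import classical_sets boolp reals.
From mathcomp Require Import ring lra zify.
Set Implicit Arguments. Unset Strict Implicit. Unset Printing Implicit Defensive.
Import Order.TTheory GRing.Theory Num.Theory.
Local Open Scope ring_scope.
Local Open Scope classical_set_scope.

Section RealInequalities.
Variable R : realFieldType.

Lemma norm_relu_le (y : R) : `|Num.max y 0| <= `|y|.
Proof. by have [y_ge0|y_lt0] := leP 0 y; rewrite ?normr0 ?normr_ge0. Qed.

Lemma relu_lipschitz (y z : R) : `|Num.max y 0 - Num.max z 0| <= `|y - z|.
Proof.
have [y_ge0|y_lt0] := leP 0 y; have [z_ge0|z_lt0] := leP 0 z;
  rewrite ?subr0 ?sub0r ?normrN ?subrr ?normr0 ?normr_ge0 //.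
- by rewrite (ger0_norm y_ge0) ger0_norm; lra.
- by rewrite (ger0_norm z_ge0) ler0_norm; lra.
Qed.

Lemma norm_le_max_itv (a b y : R) : a <= y <= b -> `|y| <= Num.max `|a| `|b|.
Proof.
case/andP=> ay yb; rewrite le_max; have [y_ge0|y_lt0] := leP 0 y.
- by rewrite ger0_norm // (le_trans yb (ler_norm b)) orbT.
- by rewrite ltr0_norm // -normrN (le_trans _ (ler_norm _)) ?lerN2.
Qed.

Lemma mulr_max1X (t : R) k :
  0 <= t -> t * Num.max 1 (t ^+ k) <= Num.max 1 (t ^+ k.+1).
Proof.
move=> t_ge0; have [t_le1|t_gt1] := leP t 1.
- by rewrite !max_l ?exprn_ile1 // mulr1.
- by rewrite !max_r ?exprn_ege1 ?(ltW t_gt1) // exprS.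
Qed.

Lemma sum_max1X_le (t u : R) n : 0 <= t -> 0 <= u ->
  \sum_(k < n) Num.max 1 (t ^+ k) * u ^+ (n - 1 - k)
    <= n%:R * Num.max 1 (Num.max t u) ^+ (n - 1).
Proof.
move=> t_ge0 u_ge0; set M := Num.max 1 (Num.max t u).
have M_ge1 : 1 <= M by rewrite le_max lexx.
have [t_le u_le] : t <= M /\ u <= M by rewrite !le_max !lexx !orbT.
rewrite mulr_natl -[X in _ *+ X](card_ord n) -sumr_const; apply: ler_sum => k _.
have -> : M ^+ (n - 1) = M ^+ k * M ^+ (n - 1 - k).
  by rewrite -exprD; congr (_ ^+ _); have := ltn_ord k; lia.
apply: ler_pM; rewrite ?exprn_ge0 ?le_max ?ler01 //.
- by rewrite ge_max exprn_ege1 // lerXn2r ?nnegrE // (le_trans ler01).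
- by rewrite lerXn2r ?nnegrE // (le_trans ler01).
Qed.

Lemma prod_nth_succ_le (l : seq nat) n : (n <= size l)%N ->
  \prod_(m < n) ((nth 0 l m + 1)%N)%:R <= (((\max_(k <- l) k) + 1)%N)%:R ^+ n :> R.
Proof.
move=> n_le; rewrite -[X in _ ^+ X](card_ord n) -prodr_const.
apply: ler_prod => m _; rewrite ler0n ler_nat leq_add2r.
by apply: (@leq_bigmax_seq _ l xpredT id) => //; apply: mem_nth; apply: leq_trans n_le.
Qed.

End RealInequalities.

Section VecAt.
Variables (R : realType) (n : nat).
Implicit Types v w : 'rV[R]_n.

Lemma vec_at_le_bound v c k :
  0 <= c -> (forall i, `|v 0 i| <= c) -> `|vec_at v k| <= c.
Proof.
by move=> c_ge0 v_le; rewrite /vec_at; case: insubP => [i _ _|_]; rewrite ?normr0.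
Qed.

Lemma norm_vec_at_le v k : `|vec_at v k| <= maxnorm v.
Proof.
rewrite /vec_at /maxnorm; case: insubP => [i _ _|_].
  exact: (le_bigmax _ (fun j => `|v 0 j|)).
by rewrite normr0 bigmax_ge_id.
Qed.

Lemma maxnorm_ge0 v : 0 <= maxnorm v.
Proof. exact: le_trans (normr_ge0 _) (norm_vec_at_le v 0). Qed.

Lemma vec_atB v w k : vec_at (v - w) k = vec_at v k - vec_at w k.
Proof. by rewrite /vec_at; case: insubP => [i _ _|_]; rewrite ?mxE ?subrr. Qed.

End VecAt.

Section LayerBoundSequences.
Variables (R : realFieldType) (l : seq nat) (C nt nv nd : R).
Hypotheses (C_ge1 : 1 <= C) (nt_ge0 : 0 <= nt) (nv_ge0 : 0 <= nv) (nd_ge0 : 0 <= nd).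

Definition width_prod k : R := \prod_(m < k) ((nth 0 l m + 1)%N)%:R.

Definition out_bound k := C * width_prod k * Num.max 1 (nt ^+ k).

Definition diff_bound k := C * nd * width_prod k *
  \sum_(n < k) Num.max 1 (nt ^+ n) * nv ^+ (k - 1 - n).

Lemma width_prod_ge1 k : 1 <= width_prod k.
Proof.
apply: (big_ind (fun y => 1 <= y)) => // [u v|m _]; first exact: mulr_ege1.
by rewrite ler1n addn1.
Qed.

Lemma out_bound_ge1 k : 1 <= out_bound k.
Proof.
have max_ge1 : 1 <= Num.max 1 (nt ^+ k) by rewrite le_max lexx.
by rewrite !mulr_ege1 ?width_prod_ge1.
Qed.

Lemma diff_bound_ge0 k : 0 <= diff_bound k.
Proof.
rewrite !mulr_ge0 ?(le_trans ler01 C_ge1) ?(le_trans ler01 (width_prod_ge1 k)) //.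
by rewrite sumr_ge0 // => n _; rewrite mulr_ge0 ?exprn_ge0 ?le_max ?ler01.
Qed.

Lemma out_boundS_ge k :
  ((nth 0 l k + 1)%N)%:R * nt * out_bound k <= out_bound k.+1.
Proof.
rewrite /out_bound /width_prod big_ord_recr /=.
set p := \prod_(_ < k) _; set q := _%:R.
have p_ge0 : 0 <= p := le_trans ler01 (width_prod_ge1 k).
have -> : q * nt * (C * p * Num.max 1 (nt ^+ k)) =
  C * (p * q) * (nt * Num.max 1 (nt ^+ k)) by ring.
by rewrite ler_wpM2l ?mulr_ge0 ?mulr_max1X ?(le_trans ler01 C_ge1).
Qed.

Lemma diff_boundS k : diff_bound k.+1 =
  ((nth 0 l k + 1)%N)%:R * (nd * out_bound k + nv * diff_bound k).
Proof.
have sumS : \sum_(n < k.+1) Num.max 1 (nt ^+ n) * nv ^+ (k.+1 - 1 - n) =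
    nv * (\sum_(n < k) Num.max 1 (nt ^+ n) * nv ^+ (k - 1 - n)) + Num.max 1 (nt ^+ k).
  rewrite big_ord_recr subSS subn0 subnn mulr1 mulr_sumr; congr (_ + _).
  apply: eq_bigr => n _ /=; rewrite mulrCA -exprS subnAC subn1 prednK //.
  by rewrite subn_gt0.
by rewrite /diff_bound /out_bound /width_prod sumS big_ord_recr /=; ring.
Qed.

End LayerBoundSequences.

Definition layer_input (R : realType) (t : nat -> R) (l : seq nat) k x :=
  if k is 0 then x else relu (layer_out t l k x).

Lemma layer_outS (R : realType) (t : nat -> R) l k x :
  layer_out t l k.+1 x =
  affine t (sidx l k) (nth 0 l k.+1) (nth 0 l k) (layer_input t l k x).
Proof. by case: k. Qed.

Section LayerBounds.
Variables (R : realType) (th tv : nat -> R) (nt nv nd : R).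
Hypotheses (th_le : forall k, `|th k| <= nt) (tv_le : forall k, `|tv k| <= nv).
Hypothesis thB_le : forall k, `|th k - tv k| <= nd.

Let nt_ge0 : 0 <= nt. Proof. exact: le_trans (normr_ge0 _) (th_le 0). Qed.
Let nv_ge0 : 0 <= nv. Proof. exact: le_trans (normr_ge0 _) (tv_le 0). Qed.
Let nd_ge0 : 0 <= nd. Proof. exact: le_trans (normr_ge0 _) (thB_le 0). Qed.

Lemma norm_affine_le k r s (z : nat -> R) (D : R) i :
  1 <= D -> (forall j, `|z j| <= D) ->
  `|affine th k r s z i| <= (s + 1)%:R * nt * D.
Proof.
move=> D_ge1 z_le; rewrite /affine.
apply: le_trans (ler_normD _ _) _.
apply: (@le_trans _ _ (s%:R * (nt * D) + nt)); last first.
  by have := nt_ge0; rewrite natrD; nra.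
apply: lerD => //; rewrite mulr_natl -[X in _ *+ X](card_ord s) -sumr_const.
apply: le_trans (ler_norm_sum _ _ _) _.
by apply: ler_sum => j _; rewrite normrM ler_pM.
Qed.

Lemma norm_affineB_le k r s (z1 z2 : nat -> R) (D E : R) i :
  1 <= D -> (forall j, `|z1 j| <= D) -> (forall j, `|z1 j - z2 j| <= E) ->
  `|affine th k r s z1 i - affine tv k r s z2 i| <= (s + 1)%:R * (nd * D + nv * E).
Proof.
move=> D_ge1 z1_le z12_le.
have E_ge0 : 0 <= E := le_trans (normr_ge0 _) (z12_le 0%N).
rewrite /affine opprD addrACA -sumrB.
apply: le_trans (ler_normD _ _) _.
apply: (@le_trans _ _ (s%:R * (nd * D + nv * E) + nd)); last first.
  by have := nd_ge0; have := nv_ge0; rewrite natrD; nra.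
apply: lerD => //; rewrite mulr_natl -[X in _ *+ X](card_ord s) -sumr_const.
apply: le_trans (ler_norm_sum _ _ _) _; apply: ler_sum => j _.
set a := th _; set c := tv _.
have -> : a * z1 j - c * z2 j = (a - c) * z1 j + c * (z1 j - z2 j) by ring.
by apply: le_trans (ler_normD _ _) _; rewrite !normrM /a /c lerD ?ler_pM ?normr_ge0.
Qed.

Variables (l : seq nat) (C : R) (x : nat -> R).
Hypotheses (C_ge1 : 1 <= C) (x_le : forall j, `|x j| <= C).

Lemma layer_input_bounds k :
  (forall i, `|layer_out th l k x i| <= out_bound l C nt k /\
     `|layer_out th l k x i - layer_out tv l k x i| <= diff_bound l C nt nv nd k) ->
  forall j, `|layer_input th l k x j| <= out_bound l C nt k /\
     `|layer_input th l k x j - layer_input tv l k x j| <= diff_bound l C nt nv nd k.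
Proof.
case: k => [|k] out_le j; first exact: out_le.
have [th_out_le diff_le] := out_le j.
by split; [exact: le_trans (norm_relu_le _) th_out_le
           |exact: le_trans (relu_lipschitz _ _) diff_le].
Qed.

Lemma layer_out_bounds k i :
  `|layer_out th l k x i| <= out_bound l C nt k /\
  `|layer_out th l k x i - layer_out tv l k x i| <= diff_bound l C nt nv nd k.
Proof.
have D_ge1 := out_bound_ge1 l nt C_ge1.
elim: k i => [|k IH] i.
  rewrite subrr normr0 (diff_bound_ge0 l nt C_ge1 nv_ge0 nd_ge0); split => //.
  by rewrite /out_bound /width_prod big_ord0 expr0 maxxx !mulr1.
have in_le := layer_input_bounds IH.
rewrite !layer_outS; split.
- apply: le_trans (out_boundS_ge l C_ge1 nt_ge0 k).
  exact: norm_affine_le (D_ge1 k) (fun j => (in_le j).1).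
- rewrite diff_boundS.
  exact: norm_affineB_le (D_ge1 k) (fun j => (in_le j).1) (fun j => (in_le j).2).
Qed.

End LayerBounds.

Theorem theorem2p36 (R : realType) (a b : R) (d L : nat)
  (l : (L.+1).-tuple nat) (theta vartheta : 'rV[R]_d) :
  a <= b -> (0 < L)%N -> (0 < d)%N -> (forall k, k \in l -> (0 < k)%N) ->
  (\sum_(1 <= k < L.+1) nth 0%N l k * (nth 0%N l k.-1 + 1) <= d)%N ->
  let C := Num.max 1 (Num.max `|a| `|b|) in
  let nt := maxnorm theta in
  let nv := maxnorm vartheta in
  let ndiff := maxnorm (theta - vartheta) in
  let P : R := \prod_(m < L) ((nth 0%N l m + 1)%N)%:R in
  let M := Num.max 1 (Num.max nt nv) in
  let nl := (\max_(k <- l) k)%N in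
  sup [set y | exists x : 'rV[R]_(nth 0%N l 0),
         (forall i, a <= x 0 i <= b) /\
         y = \big[Num.max/0]_(i < nth 0%N l L)
               `|realization l theta x i - realization l vartheta x i| ]
    <= C * ndiff * P * (\sum_(n < L) Num.max 1 (nt ^+ n) * nv ^+ (L - 1 - n))
  /\ C * ndiff * P * (\sum_(n < L) Num.max 1 (nt ^+ n) * nv ^+ (L - 1 - n))
    <= L%:R * C * M ^+ (L - 1) * P * ndiff
  /\ L%:R * C * M ^+ (L - 1) * P * ndiff
    <= L%:R * C * ((nl + 1)%N)%:R ^+ L * M ^+ (L - 1) * ndiff.
Proof.
move=> ab _ _ _ _ C nt nv ndiff P M nl.
have C_ge1 : 1 <= C by rewrite le_max lexx.
have [nt_ge0 nv_ge0] := (maxnorm_ge0 theta, maxnorm_ge0 vartheta).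
have ndiff_ge0 := maxnorm_ge0 (theta - vartheta).
have P_ge0 : 0 <= P := le_trans ler01 (width_prod_ge1 R l L).
have M_ge0 : 0 <= M by rewrite le_max ler01.
have thB_le k : `|vec_at theta k - vec_at vartheta k| <= ndiff.
  by rewrite -vec_atB norm_vec_at_le.
have net_le :=
  layer_out_bounds (norm_vec_at_le theta) (norm_vec_at_le vartheta) thB_le l C_ge1.
split; [|split].
- apply: ge_sup; first by eexists; exists (\row_i a); split => // i; rewrite mxE lexx ab.
  move=> _ [x [x_ab ->]].
  apply: bigmax_le => [|i _]; first exact: (diff_bound_ge0 l nt C_ge1 nv_ge0 ndiff_ge0).
  apply: (net_le _ _ L i).2.
  move=> j; apply: vec_at_le_bound => [|k]; first exact: le_trans ler01 C_ge1.
  by rewrite (le_trans (norm_le_max_itv (x_ab k))) // le_max lexx orbT.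
- rewrite [X in _ <= X](_ : _ = C * ndiff * P * (L%:R * M ^+ (L - 1))); last by ring.
  by rewrite ler_wpM2l ?mulr_ge0 ?sum_max1X_le // (le_trans ler01).
- rewrite [X in X <= _](_ : _ = L%:R * C * M ^+ (L - 1) * ndiff * P); last by ring.
  rewrite [X in _ <= X](_ : _ = L%:R * C * M ^+ (L - 1) * ndiff * (nl + 1)%:R ^+ L);
    last by ring.
  rewrite ler_wpM2l ?prod_nth_succ_le ?size_tuple //.
  by rewrite !mulr_ge0 ?exprn_ge0 // (le_trans ler01).
Qed.
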